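(* Let $(X,d)$ be a path-connected metric space, $x_0\in X$, $n\geq 1$. The $\pi_1$-action $\pi_1(X,x_0)\times\pi_n(X,x_0)\to\pi_n(X,x_0)$, $([\gamma],[\alpha])\mapsto[\gamma\ast\alpha]$, is jointly continuous when $\pi_1(X,x_0)$ and $\pi_n(X,x_0)$ carry the topologies induced by their pseudometrics $\rho$. Moreover, $\pi_1(X,x_0)$ acts on $(\pi_n(X,x_0),\rho)$ by isometries.
   Context: For $k\geq1$, identify $k$-loops with based maps $(S^k,d_0)\to(X,x_0)$, $d_0=(1,0,\dots,0)$, with uniform metric $\mu(\alpha,\beta)=\sup_{t}d(\alpha(t),\beta(t))$; on $\pi_k(X,x_0)$ set $\rho(a,b)=\inf\{\mu(\alpha,\beta)\mid\alpha\in a,\beta\in b\}$ (a pseudometric), topologized by its open balls. Path-conjugation: fix a retraction $r:S^n\times[0,1]\to S^n\times\{0\}\cup\{d_0\}\times[0,1]$. For a path $\gamma$ and a based map $\alpha:(S^n,d_0)\to(X,\gamma(1))$, let $h$ be $\alpha$ on $S^n\times\{0\}$ and $h(d_0,s)=\gamma(1-s)$; then $\gamma\ast\alpha:(S^n,d_0)\to(X,\gamma(0))$ is $t\mapsto h(r(t,1))$. For loops $\gamma$ at $x_0$ this induces the usual action of $\pi_1(X,x_0)$ on $\pi_n(X,x_0)$. *)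

From Stdlib Require Import Reals.
From Coquelicot Require Import Coquelicot.
Open Scope R_scope.

Record MetSpace := {
  mcarrier :> Type;
  mdist : mcarrier -> mcarrier -> R;
  mdist_ge0 : forall x y, 0 <= mdist x y;
  mdist_eq0 : forall x y, mdist x y = 0 <-> x = y;
  mdist_sym : forall x y, mdist x y = mdist y x;
  mdist_tri : forall x y z, mdist x z <= mdist x y + mdist y z }.

Arguments mdist {m} _ _.

Definition unitI (s : R) : Prop := 0 <= s <= 1.

(** Points of R^(k+1) are functions nat -> R vanishing beyond index k. *)
Definition euclid_pt (k : nat) (v : nat -> R) : Prop :=
  forall i, (k < i)%nat -> v i = 0.

Definition edist (k : nat) (u v : nat -> R) : R :=
  sqrt (sum_f_R0 (fun i => (u i - v i) ^ 2) k).

Definition sphere (k : nat) (v : nat -> R) : Prop :=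
  euclid_pt k v /\ sum_f_R0 (fun i => v i ^ 2) k = 1.

Definition d0 : nat -> R := fun i => if Nat.eqb i 0 then 1 else 0.

Definition cont_sphere {X : MetSpace} (k : nat) (f : (nat -> R) -> X) : Prop :=
  forall v, sphere k v -> forall eps, 0 < eps -> exists delta, 0 < delta /\
    forall w, sphere k w -> edist k v w < delta -> mdist (f v) (f w) < eps.

Definition cont_path {X : MetSpace} (p : R -> X) : Prop :=
  forall s, unitI s -> forall eps, 0 < eps -> exists delta, 0 < delta /\
    forall s', unitI s' -> Rabs (s - s') < delta -> mdist (p s) (p s') < eps.

Definition cont_cyl {X : MetSpace} (k : nat) (H : (nat -> R) -> R -> X) : Prop :=
  forall v s, sphere k v -> unitI s -> forall eps, 0 < eps -> exists delta, 0 < delta /\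
    forall w t, sphere k w -> unitI t -> edist k v w < delta -> Rabs (s - t) < delta ->
      mdist (H v s) (H w t) < eps.

Definition path_connected (X : MetSpace) : Prop :=
  forall x y : X, exists p : R -> X, cont_path p /\ p 0 = x /\ p 1 = y.

Definition is_loop {X : MetSpace} (k : nat) (x0 : X) (a : (nat -> R) -> X) : Prop :=
  cont_sphere k a /\ a d0 = x0.

Definition based_htpy {X : MetSpace} (k : nat) (x0 : X) (a b : (nat -> R) -> X) : Prop :=
  exists H : (nat -> R) -> R -> X, cont_cyl k H /\
    (forall v, sphere k v -> H v 0 = a v /\ H v 1 = b v) /\
    (forall s, unitI s -> H d0 s = x0).

Definition mu {X : MetSpace} (k : nat) (a b : (nat -> R) -> X) : R :=
  real (Lub_Rbar (fun r => exists v, sphere k v /\ r = mdist (a v) (b v))).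

(** The pseudometric rho([a],[b]) = inf { mu(a',b') | a' in [a], b' in [b] } on
    pi_k(X,x0), expressed through representatives a, b. *)
Definition rho {X : MetSpace} (k : nat) (x0 : X) (a b : (nat -> R) -> X) : R :=
  real (Glb_Rbar (fun r => exists a' b', is_loop k x0 a' /\ is_loop k x0 b' /\
     based_htpy k x0 a a' /\ based_htpy k x0 b b' /\ r = mu k a' b')).

Definition in_A (n : nat) (p : (nat -> R) * R) : Prop :=
  sphere n (fst p) /\ unitI (snd p) /\ (snd p = 0 \/ fst p = d0).

Definition cyl_dist (n : nat) (p q : (nat -> R) * R) : R :=
  Rmax (edist n (fst p) (fst q)) (Rabs (snd p - snd q)).

Definition is_retraction (n : nat) (r : (nat -> R) -> R -> (nat -> R) * R) : Prop :=
  (forall v s, sphere n v -> unitI s -> in_A n (r v s)) /\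
  (forall p, in_A n p -> r (fst p) (snd p) = p) /\
  (forall v s, sphere n v -> unitI s -> forall eps, 0 < eps -> exists delta, 0 < delta /\
    forall w t, sphere n w -> unitI t -> edist n v w < delta -> Rabs (s - t) < delta ->
      cyl_dist n (r v s) (r w t) < eps).

(** Path-conjugation gamma * alpha : t |-> h(r(t,1)), where h = alpha on
    S^n x {0} and h(d0,s) = gamma(1-s). *)
Definition path_conj {X : MetSpace} (n : nat) (r : (nat -> R) -> R -> (nat -> R) * R)
  (gamma : R -> X) (alpha : (nat -> R) -> X) : (nat -> R) -> X :=
  fun t => let p := r t 1 in
    if Req_EM_T (snd p) 0 then alpha (fst p) else gamma (1 - snd p).

(** The exponential map [0,1] -> S^1, s |-> (cos 2 pi s, sin 2 pi s), identifying
    a 1-loop g : S^1 -> X with the path s |-> g(e(s)). *)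
Definition circ_exp (s : R) : nat -> R :=
  fun i => if Nat.eqb i 0 then cos (2 * PI * s)
           else if Nat.eqb i 1 then sin (2 * PI * s) else 0.

Definition pi1_act {X : MetSpace} (n : nat) (r : (nat -> R) -> R -> (nat -> R) * R)
  (g : (nat -> R) -> X) (alpha : (nat -> R) -> X) : (nat -> R) -> X :=
  path_conj n r (fun s => g (circ_exp s)) alpha.

(* Path-conjugation only re-reads the loop on the bottom of the cylinder and the path along
   the base-point fibre, so pointwise it moves two loops apart by at most the larger of their
   uniform distance and the uniform distance of the two paths; it also respects based
   homotopies of both. Taking representatives that nearly realise rho(g,g') and
   rho(alpha,alpha') therefore bounds the rho-distance of the two conjugates by the larger of
   these, which gives continuity with delta = eps and shows that each [g] acts without
   expanding distances. Conjugating back along the reversed loop is homotopic to the identity,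
   so the inverse does not expand distances either and [g] acts isometrically. Uniform
   distances of loops are finite because the sphere is compact. *)

From Stdlib Require Import Reals RList Lra Lia FunctionalExtensionality ClassicalEpsilon Classical.
From Coquelicot Require Import Coquelicot.
Open Scope R_scope.

Lemma unitI_0 : unitI 0. Proof. unfold unitI; lra. Qed.
Lemma unitI_1 : unitI 1. Proof. unfold unitI; lra. Qed.

Lemma Rmax_lt_inv a b c : Rmax a b < c -> a < c /\ b < c.
Proof. intros H; pose proof (Rmax_l a b); pose proof (Rmax_r a b); split; lra. Qed.

Lemma continuity_ball (f : R -> R) : continuity f -> forall x eps, 0 < eps ->
  exists delta, 0 < delta /\ forall y, Rabs (y - x) < delta -> Rabs (f y - f x) < eps.
Proof.
  intros Hf x eps Heps. destruct (Hf x eps Heps) as [delta [Hdelta Hball]].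
  exists delta; split; [exact Hdelta|]. intros y Hy.
  destruct (Req_dec x y) as [<-|Hne].
  - rewrite Rminus_diag, Rabs_R0; exact Heps.
  - apply (Hball y). split; [split; [exact I|exact Hne]|exact Hy].
Qed.

Lemma sum_f_R0_term_le (f : nat -> R) k i : (forall j, 0 <= f j) -> (i <= k)%nat ->
  f i <= sum_f_R0 f k.
Proof.
  intros Hf Hi. induction k as [|k IH].
  - replace i with 0%nat by lia. simpl; lra.
  - simpl. destruct (Nat.eq_dec i (S k)) as [->|Hne].
    + pose proof (cond_pos_sum f k Hf). lra.
    + pose proof (IH ltac:(lia)). pose proof (Hf (S k)). lra.
Qed.

Lemma sum_f_R0_lt_const (f : nat -> R) k c : (forall i, (i <= k)%nat -> f i < c) ->
  sum_f_R0 f k < INR (S k) * c.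
Proof.
  induction k as [|k IH]; intros Hf.
  - simpl. specialize (Hf 0%nat (le_n 0)). lra.
  - rewrite tech5, S_INR. specialize (IH (fun i Hi => Hf i ltac:(lia))).
    specialize (Hf (S k) (le_n _)). lra.
Qed.

Lemma edist_lt_coord k v w d : 0 < d ->
  (forall i, (i <= k)%nat -> Rabs (v i - w i) < d) -> edist k v w < INR (S k) * d.
Proof.
  intros Hd Hvw. unfold edist.
  assert (Hk : 1 <= INR (S k)) by (rewrite S_INR; pose proof (pos_INR k); lra).
  rewrite <- (sqrt_pow2 (INR (S k) * d)) by nra.
  apply sqrt_lt_1_alt. split; [apply cond_pos_sum; intros; apply pow2_ge_0|].
  apply Rlt_le_trans with (INR (S k) * d ^ 2).
  - apply sum_f_R0_lt_const. intros i Hi. rewrite <- pow2_abs.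
    pose proof (Hvw i Hi). pose proof (Rabs_pos (v i - w i)). nra.
  - nra.
Qed.

Lemma sphere_d0 k : sphere k d0.
Proof.
  split.
  - intros i Hi. unfold d0. destruct i; [lia|reflexivity].
  - induction k as [|k IH]; [simpl; unfold d0; simpl; ring|].
    rewrite tech5, IH. unfold d0; simpl; ring.
Qed.

Lemma sphere_coord_le_1 k v i : sphere k v -> Rabs (v i) <= 1.
Proof.
  intros [Hzero Hsum]. destruct (Compare_dec.le_lt_dec i k) as [Hi|Hi].
  - pose proof (sum_f_R0_term_le (fun j => v j ^ 2) k i (fun j => pow2_ge_0 _) Hi) as H.
    cbv beta in H. rewrite Hsum in H. rewrite <- Rabs_R1. apply Rsqr_le_abs_0. unfold Rsqr. lra.
  - rewrite Hzero by lia. rewrite Rabs_R0; lra.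
Qed.

Lemma sphere_circ_exp s : sphere 1 (circ_exp s).
Proof.
  split.
  - intros i Hi. unfold circ_exp. destruct i as [|[|i]]; try lia. reflexivity.
  - simpl. unfold circ_exp; simpl. pose proof (sin2_cos2 (2 * PI * s)). unfold Rsqr in *. lra.
Qed.

Lemma circ_exp_0 : circ_exp 0 = d0.
Proof.
  apply functional_extensionality; intros i. unfold circ_exp, d0.
  destruct i as [|[|i]]; simpl; rewrite ?Rmult_0_r, ?cos_0, ?sin_0; reflexivity.
Qed.

Lemma circ_exp_1 : circ_exp 1 = d0.
Proof.
  apply functional_extensionality; intros i. unfold circ_exp, d0.
  destruct i as [|[|i]]; simpl; rewrite ?Rmult_1_r, ?cos_2PI, ?sin_2PI; reflexivity.
Qed.

Lemma circ_exp_cont a eps : 0 < eps -> exists delta, 0 < delta /\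
  forall b, Rabs (a - b) < delta -> edist 1 (circ_exp a) (circ_exp b) < eps.
Proof.
  intros Heps. pose proof PI_RGT_0.
  destruct (continuity_ball cos continuity_cos (2 * PI * a) (eps / 2)) as [d1 [Hd1 Hcos]]; [lra|].
  destruct (continuity_ball sin continuity_sin (2 * PI * a) (eps / 2)) as [d2 [Hd2 Hsin]]; [lra|].
  exists (Rmin d1 d2 / (2 * PI)). split; [apply Rdiv_lt_0_compat; [apply Rmin_pos|]; lra|].
  intros b Hb.
  assert (Hangle : Rabs (2 * PI * b - 2 * PI * a) < Rmin d1 d2).
  { replace (2 * PI * b - 2 * PI * a) with (2 * PI * (b - a)) by ring.
    rewrite Rabs_mult, (Rabs_right (2 * PI)), Rabs_minus_sym by lra.
    apply Rmult_lt_compat_l with (r := 2 * PI) in Hb; [|lra].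
    replace (2 * PI * (Rmin d1 d2 / (2 * PI))) with (Rmin d1 d2) in Hb by (field; lra). exact Hb. }
  pose proof (Rmin_l d1 d2). pose proof (Rmin_r d1 d2).
  replace eps with (INR 2 * (eps / 2)) by (simpl; field).
  apply edist_lt_coord; [lra|]. intros i Hi. unfold circ_exp.
  destruct i as [|[|i]]; [| |lia]; simpl; rewrite Rabs_minus_sym.
  - apply Hcos; lra.
  - apply Hsin; lra.
Qed.

(** * Compactness of the sphere *)

Fixpoint tn_of_fun (m : nat) (v : nat -> R) : Tn m R :=
  match m return Tn m R with
  | O => tt
  | S m' => (v O, tn_of_fun m' (fun j => v (S j)))
  end.

Fixpoint fun_of_tn (m : nat) : Tn m R -> nat -> R :=
  match m return Tn m R -> nat -> R with
  | O => fun _ _ => 0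
  | S m' => fun x i => match i with O => fst x | S j => fun_of_tn m' (snd x) j end
  end.

Lemma fun_of_tn_out m x i : (m <= i)%nat -> fun_of_tn m x i = 0.
Proof.
  revert x i; induction m as [|m IH]; intros x i Hi; [reflexivity|].
  destruct i; [lia|]. apply IH; lia.
Qed.

Lemma close_n_tn_of_fun m d v x : close_n m d (tn_of_fun m v) x ->
  forall i, (i < m)%nat -> Rabs (v i - fun_of_tn m x i) < d.
Proof.
  revert v x; induction m as [|m IH]; intros v x Hclose i Hi; [lia|]. destruct x as [x1 x2].
  destruct Hclose as [H1 H2]. destruct i as [|i]; [exact H1|].
  apply (IH (fun j => v (S j))); [exact H2|lia].
Qed.

Lemma bounded_n_tn_of_fun m v : (forall i, Rabs (v i) <= 1) ->
  bounded_n m (tn_of_fun m (fun _ => -1)) (tn_of_fun m (fun _ => 1)) (tn_of_fun m v).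
Proof.
  revert v; induction m as [|m IH]; intros v Hv; [exact I|]. split.
  - apply Rabs_le_between, Hv.
  - apply IH. intros i; apply Hv.
Qed.

Lemma sphere_coord_gap k t : euclid_pt k t -> ~ sphere k t -> exists d, 0 < d /\
  forall w, sphere k w -> ~ (forall i, (i <= k)%nat -> Rabs (w i - t i) < d).
Proof.
  intros Ht Hnot. set (c := Rabs (sum_f_R0 (fun i => t i ^ 2) k - 1)).
  assert (Hc : 0 < c).
  { apply Rabs_pos_lt. intros E. apply Hnot. split; [exact Ht|lra]. }
  assert (Hk : 1 <= INR (S k)) by (rewrite S_INR; pose proof (pos_INR k); lra).
  set (d := Rmin 1 (c / (3 * INR (S k)))).
  assert (Hd : 0 < d) by (apply Rmin_pos; [lra|apply Rdiv_lt_0_compat; lra]).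
  exists d; split; [exact Hd|]. intros w Hw Hclose.
  assert (Hsq : forall i, (i <= k)%nat -> Rabs (w i ^ 2 - t i ^ 2) < 3 * d).
  { intros i Hi. pose proof (sphere_coord_le_1 k w i Hw) as Hwi.
    pose proof (Hclose i Hi) as Hwt. assert (d <= 1) by apply Rmin_l.
    replace (w i ^ 2 - t i ^ 2) with ((w i - t i) * (w i + t i)) by ring.
    rewrite Rabs_mult.
    assert (Rabs (w i + t i) <= 3).
    { replace (w i + t i) with (2 * w i - (w i - t i)) by ring.
      eapply Rle_trans; [apply Rabs_triang|].
      rewrite Rabs_Ropp, Rabs_mult, (Rabs_right 2) by lra. lra. }
    pose proof (Rabs_pos (w i + t i)). pose proof (Rabs_pos (w i - t i)). nra. }
  assert (Hsum : Rabs (sum_f_R0 (fun i => w i ^ 2 - t i ^ 2) k) < INR (S k) * (3 * d)).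
  { eapply Rle_lt_trans; [apply Rsum_abs|]. apply sum_f_R0_lt_const. exact Hsq. }
  rewrite minus_sum, (proj2 Hw) in Hsum.
  rewrite Rabs_minus_sym in Hsum. fold c in Hsum.
  assert (INR (S k) * (3 * d) <= c).
  { assert (Hd_le : d <= c / (3 * INR (S k))) by apply Rmin_r.
    apply Rmult_le_compat_l with (r := 3 * INR (S k)) in Hd_le; [|lra].
    replace (3 * INR (S k) * (c / (3 * INR (S k)))) with c in Hd_le by (field; lra). lra. }
  lra.
Qed.

Lemma sphere_bounded_of_locally_bounded k (f : (nat -> R) -> R) :
  (forall v, sphere k v -> exists delta C, 0 < delta /\
     forall w, sphere k w -> edist k v w < delta -> f w <= C) ->
  exists M, forall v, sphere k v -> f v <= M.
Proof.
  intros Hloc. set (m := S k).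
  (* Each point [x] of the box [-1,1]^(k+1) gets a radius and a bound for [f] at the sphere
     points that close to [x]; off the sphere the radius is so small that there are none. *)
  assert (Hk : 1 <= INR m) by (unfold m; rewrite S_INR; pose proof (pos_INR k); lra).
  set (Cover := fun (x : Tn m R) (p : R * R) => 0 < fst p /\ forall w, sphere k w ->
    (forall i, (i <= k)%nat -> Rabs (w i - fun_of_tn m x i) < fst p) -> f w <= snd p).
  assert (Hcover : forall x, exists p, Cover x p).
  { intros x. assert (Hx : euclid_pt k (fun_of_tn m x)).
    { intros i Hi. apply fun_of_tn_out. unfold m; lia. }
    destruct (classic (sphere k (fun_of_tn m x))) as [Hs|Hs].
    - destruct (Hloc _ Hs) as [delta [C [Hdelta Hball]]].
      exists (delta / INR m, C). split; [apply Rdiv_lt_0_compat; lra|].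
      intros w Hw Hclose. apply Hball; [exact Hw|].
      replace delta with (INR m * (delta / INR m)) by (field; lra).
      apply edist_lt_coord; [apply Rdiv_lt_0_compat; lra|].
      intros i Hi. rewrite Rabs_minus_sym. apply Hclose, Hi.
    - destruct (sphere_coord_gap k _ Hx Hs) as [d [Hd Hgap]].
      exists (d, 0). split; [exact Hd|]. intros w Hw Hclose. exfalso. exact (Hgap w Hw Hclose). }
  set (pick := fun x => proj1_sig (constructive_indefinite_description _ (Hcover x))).
  assert (Hpick : forall x, Cover x (pick x))
    by (intros x; exact (proj2_sig (constructive_indefinite_description _ (Hcover x)))).
  set (radius := fun x => mkposreal (fst (pick x)) (proj1 (Hpick x))).
  apply NNPP. intros Hunbounded.
  apply (compactness_list m (tn_of_fun m (fun _ => -1)) (tn_of_fun m (fun _ => 1)) radius).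
  intros [l Hl]. apply Hunbounded.
  exists (MaxRlist (List.map (fun x => snd (pick x)) l)). intros v Hv.
  destruct (Hl (tn_of_fun m v)) as [x [Hin [_ Hclose]]].
  { apply bounded_n_tn_of_fun. intros i. apply (sphere_coord_le_1 k), Hv. }
  eapply Rle_trans.
  - apply (proj2 (Hpick x) v Hv). intros i Hi.
    apply (close_n_tn_of_fun m (radius x)); [exact Hclose|unfold m; lia].
  - apply MaxRlist_P1, (List.in_map (fun y => snd (pick y))), Hin.
Qed.

Lemma loop_dist_bounded {X : MetSpace} k (a b : (nat -> R) -> X) :
  cont_sphere k a -> cont_sphere k b -> exists M, forall v, sphere k v -> mdist (a v) (b v) <= M.
Proof.
  intros Ha Hb. apply sphere_bounded_of_locally_bounded. intros v Hv.
  destruct (Ha v Hv 1 Rlt_0_1) as [da [Hda Hav]].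
  destruct (Hb v Hv 1 Rlt_0_1) as [db [Hdb Hbv]].
  exists (Rmin da db), (mdist (a v) (b v) + 2). split; [apply Rmin_pos; lra|].
  intros w Hw Hvw. pose proof (Rmin_l da db). pose proof (Rmin_r da db).
  specialize (Hav w Hw ltac:(lra)). specialize (Hbv w Hw ltac:(lra)).
  pose proof (mdist_tri _ (a w) (a v) (b w)). pose proof (mdist_tri _ (a v) (b v) (b w)).
  rewrite (mdist_sym _ (a w) (a v)) in *. lra.
Qed.

(** * Based homotopies *)

Lemma cont_cyl_stationary {X : MetSpace} k (a : (nat -> R) -> X) :
  cont_sphere k a -> cont_cyl k (fun v _ => a v).
Proof.
  intros Ha v s Hv _ eps Heps. destruct (Ha v Hv eps Heps) as [delta [Hdelta Hball]].
  exists delta; split; [exact Hdelta|]. intros w t Hw _ Hvw _. apply Hball; assumption.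
Qed.

Lemma based_htpy_refl {X : MetSpace} k (x0 : X) a : is_loop k x0 a -> based_htpy k x0 a a.
Proof.
  intros [Ha Ha0]. exists (fun v _ => a v).
  split; [apply cont_cyl_stationary, Ha|split; [intros; split; reflexivity|intros; exact Ha0]].
Qed.

Lemma loop_of_based_htpy {X : MetSpace} k (x0 : X) a b : based_htpy k x0 a b -> is_loop k x0 b.
Proof.
  intros [H [HH [Hends Hbase]]]. split.
  - intros v Hv eps Heps. destruct (HH v 1 Hv unitI_1 eps Heps) as [delta [Hdelta Hball]].
    exists delta; split; [exact Hdelta|]. intros w Hw Hvw.
    rewrite <- (proj2 (Hends v Hv)), <- (proj2 (Hends w Hw)).
    apply Hball; [exact Hw|exact unitI_1|exact Hvw|rewrite Rminus_diag, Rabs_R0; exact Hdelta].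
  - rewrite <- (proj2 (Hends d0 (sphere_d0 k))). apply Hbase, unitI_1.
Qed.

Lemma cont_cyl_rescale {X : MetSpace} k (H : (nat -> R) -> R -> X) c v s :
  cont_cyl k H -> sphere k v -> unitI (2 * s - c) -> forall eps, 0 < eps ->
  exists delta, 0 < delta /\ forall w t, sphere k w -> unitI (2 * t - c) ->
    edist k v w < delta -> Rabs (s - t) < delta -> mdist (H v (2 * s - c)) (H w (2 * t - c)) < eps.
Proof.
  intros HH Hv Hs eps Heps. destruct (HH v _ Hv Hs eps Heps) as [delta [Hdelta Hball]].
  exists (delta / 2). split; [lra|]. intros w t Hw Ht Hvw Hst.
  apply Hball; [exact Hw|exact Ht|lra|].
  replace (2 * s - c - (2 * t - c)) with (2 * (s - t)) by ring.
  rewrite Rabs_mult, Rabs_right by lra. lra.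
Qed.

Lemma cont_cyl_concat {X : MetSpace} k (H1 H2 : (nat -> R) -> R -> X) :
  cont_cyl k H1 -> cont_cyl k H2 -> (forall v, sphere k v -> H1 v 1 = H2 v 0) ->
  cont_cyl k (fun v s => if Rle_dec s (1 / 2) then H1 v (2 * s) else H2 v (2 * s - 1)).
Proof.
  intros HH1 HH2 Hseam v s Hv Hs eps Heps. unfold unitI in Hs.
  assert (HH1' := cont_cyl_rescale k H1 0 v s HH1 Hv).
  assert (HH2' := cont_cyl_rescale k H2 1 v s HH2 Hv).
  destruct (Rlt_le_dec s (1 / 2)) as [Hlt|Hge]; [|destruct (Rle_lt_or_eq_dec _ _ Hge) as [Hgt|Heq]].
  - destruct (HH1' ltac:(unfold unitI; lra) eps Heps) as [delta [Hdelta Hball]].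
    exists (Rmin delta (1 / 2 - s)). split; [apply Rmin_pos; lra|].
    intros w t Hw Ht Hvw Hst.
    pose proof (Rmin_l delta (1 / 2 - s)). pose proof (Rmin_r delta (1 / 2 - s)).
    unfold unitI in Ht. apply Rabs_def2 in Hst.
    destruct (Rle_dec s (1 / 2)), (Rle_dec t (1 / 2)); try lra.
    rewrite <- (Rminus_0_r (2 * s)), <- (Rminus_0_r (2 * t)).
    apply Hball; [exact Hw|unfold unitI; lra|lra|apply Rabs_def1; lra].
  - destruct (HH2' ltac:(unfold unitI; lra) eps Heps) as [delta [Hdelta Hball]].
    exists (Rmin delta (s - 1 / 2)). split; [apply Rmin_pos; lra|].
    intros w t Hw Ht Hvw Hst.
    pose proof (Rmin_l delta (s - 1 / 2)). pose proof (Rmin_r delta (s - 1 / 2)).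
    unfold unitI in Ht. apply Rabs_def2 in Hst.
    destruct (Rle_dec s (1 / 2)), (Rle_dec t (1 / 2)); try lra.
    apply Hball; [exact Hw|unfold unitI; lra|lra|apply Rabs_def1; lra].
  - subst s. destruct (Rle_dec (1 / 2) (1 / 2)) as [_|]; [|lra].
    destruct (HH1' ltac:(unfold unitI; lra) eps Heps) as [d1 [Hd1 Hball1]].
    destruct (HH2' ltac:(unfold unitI; lra) eps Heps) as [d2 [Hd2 Hball2]].
    exists (Rmin d1 d2). split; [apply Rmin_pos; lra|].
    intros w t Hw Ht Hvw Hst. pose proof (Rmin_l d1 d2). pose proof (Rmin_r d1 d2).
    unfold unitI in Ht. destruct (Rle_dec t (1 / 2)).
    + rewrite <- (Rminus_0_r (2 * (1 / 2))), <- (Rminus_0_r (2 * t)).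
      apply Hball1; [exact Hw|unfold unitI; lra|lra|lra].
    + replace (2 * (1 / 2)) with 1 by field. rewrite Hseam by exact Hv.
      replace 0 with (2 * (1 / 2) - 1) by field.
      apply Hball2; [exact Hw|unfold unitI; lra|lra|lra].
Qed.

Lemma based_htpy_trans {X : MetSpace} k (x0 : X) a b c :
  based_htpy k x0 a b -> based_htpy k x0 b c -> based_htpy k x0 a c.
Proof.
  intros [H1 [HH1 [Hends1 Hbase1]]] [H2 [HH2 [Hends2 Hbase2]]].
  exists (fun v s => if Rle_dec s (1 / 2) then H1 v (2 * s) else H2 v (2 * s - 1)). split; [|split].
  - apply cont_cyl_concat; [exact HH1|exact HH2|].
    intros v Hv. rewrite (proj2 (Hends1 v Hv)), (proj1 (Hends2 v Hv)). reflexivity.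
  - intros v Hv. split.
    + destruct (Rle_dec 0 (1 / 2)); [|lra]. rewrite Rmult_0_r. apply Hends1, Hv.
    + destruct (Rle_dec 1 (1 / 2)); [lra|]. replace (2 * 1 - 1) with 1 by ring. apply Hends2, Hv.
  - intros s Hs. unfold unitI in Hs. destruct (Rle_dec s (1 / 2)).
    + apply Hbase1. unfold unitI; lra.
    + apply Hbase2. unfold unitI; lra.
Qed.

(** * The uniform distance and the pseudometric rho *)

Lemma Lub_Rbar_real_bounds (E : R -> Prop) x M : E x -> (forall y, E y -> y <= M) ->
  (forall y, E y -> y <= real (Lub_Rbar E)) /\ real (Lub_Rbar E) <= M.
Proof.
  intros Hx HM. destruct (Lub_Rbar_correct E) as [Hub Hlub].
  assert (Hle : Rbar_le (Lub_Rbar E) M) by (apply Hlub; intros y Hy; apply HM, Hy).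
  pose proof (Hub x Hx) as Hge.
  destruct (Lub_Rbar E); simpl in *; try contradiction.
  split; [intros y Hy; exact (Hub y Hy)|exact Hle].
Qed.

Lemma Glb_Rbar_real_bounds (E : R -> Prop) x m : (forall y, E y -> 0 <= y) -> E x ->
  (forall y, E y -> m <= y) -> real (Glb_Rbar E) <= x /\ m <= real (Glb_Rbar E).
Proof.
  intros Hnonneg Hx Hm. destruct (Glb_Rbar_correct E) as [Hlb Hglb].
  assert (Hge : Rbar_le m (Glb_Rbar E)) by (apply Hglb; intros y Hy; apply Hm, Hy).
  pose proof (Hlb x Hx) as Hle.
  destruct (Glb_Rbar E); simpl in *; try contradiction. split; assumption.
Qed.

Lemma mu_le {X : MetSpace} k (a b : (nat -> R) -> X) M :
  (forall v, sphere k v -> mdist (a v) (b v) <= M) -> mu k a b <= M.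
Proof.
  intros HM. refine (proj2 (Lub_Rbar_real_bounds _ (mdist (a d0) (b d0)) M _ _)).
  - exists d0; split; [apply sphere_d0|reflexivity].
  - intros y [v [Hv ->]]. apply HM, Hv.
Qed.

Lemma mu_ge {X : MetSpace} k (a b : (nat -> R) -> X) v :
  cont_sphere k a -> cont_sphere k b -> sphere k v -> mdist (a v) (b v) <= mu k a b.
Proof.
  intros Ha Hb Hv. destruct (loop_dist_bounded k a b Ha Hb) as [M HM].
  refine (proj1 (Lub_Rbar_real_bounds _ (mdist (a v) (b v)) M _ _) _ _).
  - exists v; split; [exact Hv|reflexivity].
  - intros y [w [Hw ->]]. apply HM, Hw.
  - exists v; split; [exact Hv|reflexivity].
Qed.

Lemma mu_nonneg {X : MetSpace} k (a b : (nat -> R) -> X) :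
  cont_sphere k a -> cont_sphere k b -> 0 <= mu k a b.
Proof.
  intros Ha Hb. eapply Rle_trans; [apply mdist_ge0|].
  apply mu_ge; [exact Ha|exact Hb|apply (sphere_d0 k)].
Qed.

Lemma rho_le {X : MetSpace} k (x0 : X) a b a' b' : is_loop k x0 a' -> is_loop k x0 b' ->
  based_htpy k x0 a a' -> based_htpy k x0 b b' -> rho k x0 a b <= mu k a' b'.
Proof.
  intros Ha' Hb' Haa' Hbb'.
  refine (proj1 (Glb_Rbar_real_bounds _ (mu k a' b') 0 _ _ _)).
  - intros y [a'' [b'' [Ha'' [Hb'' [_ [_ ->]]]]]]. apply mu_nonneg; [apply Ha''|apply Hb''].
  - exists a', b'. exact (conj Ha' (conj Hb' (conj Haa' (conj Hbb' eq_refl)))).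
  - intros y [a'' [b'' [Ha'' [Hb'' [_ [_ ->]]]]]]. apply mu_nonneg; [apply Ha''|apply Hb''].
Qed.

Lemma rho_ge {X : MetSpace} k (x0 : X) a b m : is_loop k x0 a -> is_loop k x0 b ->
  (forall a' b', is_loop k x0 a' -> is_loop k x0 b' ->
     based_htpy k x0 a a' -> based_htpy k x0 b b' -> m <= mu k a' b') ->
  m <= rho k x0 a b.
Proof.
  intros Ha Hb Hm.
  refine (proj2 (Glb_Rbar_real_bounds _ (mu k a b) m _ _ _)).
  - intros y [a' [b' [Ha' [Hb' [_ [_ ->]]]]]]. apply mu_nonneg; [apply Ha'|apply Hb'].
  - exists a, b.
    exact (conj Ha (conj Hb (conj (based_htpy_refl k x0 a Ha)
      (conj (based_htpy_refl k x0 b Hb) eq_refl)))).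
  - intros y [a' [b' [Ha' [Hb' [Haa' [Hbb' ->]]]]]]. apply Hm; assumption.
Qed.

Lemma rho_lt {X : MetSpace} k (x0 : X) a b d : is_loop k x0 a -> is_loop k x0 b ->
  rho k x0 a b < d -> exists a' b', is_loop k x0 a' /\ is_loop k x0 b' /\
    based_htpy k x0 a a' /\ based_htpy k x0 b b' /\ mu k a' b' < d.
Proof.
  intros Ha Hb Hd. apply NNPP. intros Hnone.
  apply (Rlt_not_le _ _ Hd). apply rho_ge; [exact Ha|exact Hb|].
  intros a' b' Ha' Hb' Haa' Hbb'. apply Rnot_lt_le. intros Hlt.
  apply Hnone. exists a', b'. exact (conj Ha' (conj Hb' (conj Haa' (conj Hbb' Hlt)))).
Qed.

Lemma rho_le_of_nonexpanding {X : MetSpace} k (x0 : X)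
  (F : ((nat -> R) -> X) -> (nat -> R) -> X) a b c d :
  is_loop k x0 c -> is_loop k x0 d ->
  (forall c' d', is_loop k x0 c' -> is_loop k x0 d' -> mu k (F c') (F d') <= mu k c' d') ->
  (forall c', is_loop k x0 c' -> based_htpy k x0 c c' -> based_htpy k x0 a (F c')) ->
  (forall d', is_loop k x0 d' -> based_htpy k x0 d d' -> based_htpy k x0 b (F d')) ->
  rho k x0 a b <= rho k x0 c d.
Proof.
  intros Hc Hd HF Hac Hbd. apply rho_ge; [exact Hc|exact Hd|].
  intros c' d' Hc' Hd' Hcc' Hdd'.
  apply Rle_trans with (mu k (F c') (F d')); [|apply HF; assumption].
  apply rho_le; eauto using loop_of_based_htpy.
Qed.

(** * Families of paths and gluing along the retraction *)

Definition cont_square {X : MetSpace} (T : R -> R -> X) : Prop :=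
  forall s u, unitI s -> unitI u -> forall eps, 0 < eps -> exists delta, 0 < delta /\
    forall s' u', unitI s' -> unitI u' -> Rabs (s - s') < delta -> Rabs (u - u') < delta ->
      mdist (T s u) (T s' u') < eps.

Definition square_lipschitz (phi : R -> R -> R) : Prop :=
  forall s u s' u', unitI s -> unitI u -> unitI s' -> unitI u' ->
    Rabs (phi s u - phi s' u') <= Rabs (s - s') + Rabs (u - u').

Lemma square_lipschitz_snd : square_lipschitz (fun _ u => u).
Proof. intros s u s' u' _ _ _ _. pose proof (Rabs_pos (s - s')). lra. Qed.

Lemma square_lipschitz_1_sub_snd : square_lipschitz (fun _ u => 1 - u).
Proof.
  intros s u s' u' _ _ _ _. replace (1 - u - (1 - u')) with (- (u - u')) by ring.
  rewrite Rabs_Ropp. pose proof (Rabs_pos (s - s')). lra.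
Qed.

Lemma square_lipschitz_1_sub_mul : square_lipschitz (fun s u => 1 - s * u).
Proof.
  intros s u s' u' _ [Hu0 Hu1] [Hs0 Hs1] _.
  replace (1 - s * u - (1 - s' * u')) with (- ((s - s') * u + s' * (u - u'))) by ring.
  rewrite Rabs_Ropp. eapply Rle_trans; [apply Rabs_triang|]. rewrite !Rabs_mult.
  rewrite (Rabs_right u), (Rabs_right s') by lra.
  pose proof (Rabs_pos (s - s')). pose proof (Rabs_pos (u - u')). nra.
Qed.

Lemma cont_square_circ {X : MetSpace} (H : (nat -> R) -> R -> X) phi :
  cont_cyl 1 H -> square_lipschitz phi -> cont_square (fun s u => H (circ_exp (phi s u)) s).
Proof.
  intros HH Hphi s u Hs Hu eps Heps.
  destruct (HH (circ_exp (phi s u)) s (sphere_circ_exp _) Hs eps Heps) as [dH [HdH HballH]].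
  destruct (circ_exp_cont (phi s u) dH HdH) as [de [Hde Hballe]].
  exists (Rmin dH (de / 2)). split; [apply Rmin_pos; lra|].
  intros s' u' Hs' Hu' Hss' Huu'. pose proof (Rmin_l dH (de / 2)). pose proof (Rmin_r dH (de / 2)).
  apply HballH; [apply sphere_circ_exp|exact Hs'| |lra].
  apply Hballe. eapply Rle_lt_trans; [apply Hphi; assumption|lra].
Qed.

Lemma cont_square_const {X : MetSpace} (x : X) : cont_square (fun _ _ => x).
Proof.
  intros s u _ _ eps Heps. exists 1. split; [lra|]. intros.
  rewrite (proj2 (mdist_eq0 _ x x) eq_refl). exact Heps.
Qed.

Lemma cont_square_reflect {X : MetSpace} (T : R -> R -> X) :
  cont_square T -> cont_square (fun s u => T s (1 - u)).
Proof.
  intros HT s u Hs Hu eps Heps. unfold unitI in Hu.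
  destruct (HT s (1 - u) Hs ltac:(unfold unitI; lra) eps Heps) as [delta [Hdelta Hball]].
  exists delta. split; [exact Hdelta|]. intros s' u' Hs' Hu' Hss' Huu'. unfold unitI in Hu'.
  apply Hball; [exact Hs'|unfold unitI; lra|exact Hss'|].
  replace (1 - u - (1 - u')) with (- (u - u')) by ring. rewrite Rabs_Ropp. exact Huu'.
Qed.

(* [paste B T] is the map on A x [0,1] equal to [B] on S^n x {0} and to [T s] on {d0} x [0,1];
   [glue r B T _ s] is its extension to S^n x [0,1] through the retraction. *)
Definition paste {X : MetSpace} (B : (nat -> R) -> R -> X) (T : R -> R -> X)
  (p : (nat -> R) * R) (s : R) : X :=
  if Req_EM_T (snd p) 0 then B (fst p) s else T s (snd p).

Definition glue {X : MetSpace} (r : (nat -> R) -> R -> (nat -> R) * R)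
  (B : (nat -> R) -> R -> X) (T : R -> R -> X) (t : nat -> R) (s u : R) : X :=
  paste B T (r t u) s.

Section Glue.

Context {X : MetSpace} (n : nat) (r : (nat -> R) -> R -> (nat -> R) * R).
Context (B : (nat -> R) -> R -> X) (T : R -> R -> X).
Hypothesis Hr : is_retraction n r.
Hypothesis HB : cont_cyl n B.
Hypothesis HT : cont_square T.
Hypothesis Hseam : forall s, unitI s -> B d0 s = T s 0.

Lemma paste_cont_bottom v s : sphere n v -> unitI s -> forall eps, 0 < eps ->
  exists delta, 0 < delta /\ forall q s', in_A n q -> unitI s' ->
    cyl_dist n (v, 0) q < delta -> Rabs (s - s') < delta ->
    mdist (paste B T (v, 0) s) (paste B T q s') < eps.
Proof.
  intros Hv Hs eps Heps.
  destruct (HB v s Hv Hs (eps / 2)) as [dB [HdB HballB]]; [lra|].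
  destruct (HT s 0 Hs unitI_0 (eps / 2)) as [dT [HdT HballT]]; [lra|].
  exists (Rmin dB dT). split; [apply Rmin_pos; lra|].
  intros [w u] s' [Hw [Hu Hside]] Hs' Hdist Hss'. simpl in Hw, Hu, Hside.
  apply Rmax_lt_inv in Hdist as [Hvw Hu0]. simpl in Hvw, Hu0.
  pose proof (Rmin_l dB dT). pose proof (Rmin_r dB dT).
  unfold paste; simpl. destruct (Req_EM_T 0 0) as [_|]; [|congruence].
  destruct (Req_EM_T u 0) as [->|Hu_ne].
  - enough (mdist (B v s) (B w s') < eps / 2) by lra. apply HballB; auto; lra.
  - destruct Hside as [Hu0' | Hw0]; [contradiction|subst w].
    assert (mdist (B v s) (B d0 s) < eps / 2).
    { apply HballB; [apply sphere_d0|exact Hs|lra|rewrite Rminus_diag, Rabs_R0; lra]. }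
    assert (mdist (T s 0) (T s' u) < eps / 2) by (apply HballT; auto; lra).
    rewrite <- Hseam in * by exact Hs.
    pose proof (mdist_tri _ (B v s) (B d0 s) (T s' u)). lra.
Qed.

Lemma paste_cont_fibre p s : unitI (snd p) -> snd p <> 0 -> unitI s -> forall eps, 0 < eps ->
  exists delta, 0 < delta /\ forall q s', in_A n q -> unitI s' ->
    cyl_dist n p q < delta -> Rabs (s - s') < delta ->
    mdist (paste B T p s) (paste B T q s') < eps.
Proof.
  intros Hu Hu_ne Hs eps Heps.
  destruct (HT s (snd p) Hs Hu eps Heps) as [dT [HdT HballT]].
  assert (Hgap : 0 < Rabs (snd p)) by (apply Rabs_pos_lt, Hu_ne).
  exists (Rmin dT (Rabs (snd p))). split; [apply Rmin_pos; lra|].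
  intros q s' [_ [Hq _]] Hs' Hdist Hss'. apply Rmax_lt_inv in Hdist as [_ Hpq].
  pose proof (Rmin_l dT (Rabs (snd p))). pose proof (Rmin_r dT (Rabs (snd p))).
  unfold paste. destruct (Req_EM_T (snd p) 0) as [|_]; [contradiction|].
  destruct (Req_EM_T (snd q) 0) as [Hq0|_].
  - rewrite Hq0, Rminus_0_r in Hpq. lra.
  - apply HballT; auto; lra.
Qed.

Lemma glue_cont t s u : sphere n t -> unitI s -> unitI u -> forall eps, 0 < eps ->
  exists delta, 0 < delta /\ forall t' s' u', sphere n t' -> unitI s' -> unitI u' ->
    edist n t t' < delta -> Rabs (s - s') < delta -> Rabs (u - u') < delta ->
    mdist (glue r B T t s u) (glue r B T t' s' u') < eps.
Proof.
  intros Ht Hs Hu eps Heps. destruct Hr as [HA [_ Hrcont]].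
  assert (Hpaste : exists delta, 0 < delta /\ forall q s', in_A n q -> unitI s' ->
    cyl_dist n (r t u) q < delta -> Rabs (s - s') < delta ->
    mdist (paste B T (r t u) s) (paste B T q s') < eps).
  { destruct (HA t u Ht Hu) as [Hp [Hpu _]]. destruct (Req_EM_T (snd (r t u)) 0) as [Hp0|Hp0].
    - destruct (r t u) as [v u0]. simpl in Hp, Hp0. subst u0. apply paste_cont_bottom; assumption.
    - apply paste_cont_fibre; assumption. }
  destruct Hpaste as (dp & Hdp & Hballp).
  destruct (Hrcont t u Ht Hu dp Hdp) as [dr [Hdr Hballr]].
  exists (Rmin dr dp). split; [apply Rmin_pos; lra|].
  intros t' s' u' Ht' Hs' Hu' Htt' Hss' Huu'. pose proof (Rmin_l dr dp). pose proof (Rmin_r dr dp).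
  apply Hballp; [apply HA; assumption|exact Hs'|apply Hballr; auto; lra|lra].
Qed.

Lemma cont_cyl_glue_ts u : unitI u -> cont_cyl n (fun t s => glue r B T t s u).
Proof.
  intros Hu t s Ht Hs eps Heps.
  destruct (glue_cont t s u Ht Hs Hu eps Heps) as [delta [Hdelta Hball]].
  exists delta; split; [exact Hdelta|]. intros t' s' Ht' Hs' Htt' Hss'.
  apply Hball; auto. rewrite Rminus_diag, Rabs_R0; exact Hdelta.
Qed.

Lemma cont_cyl_glue_tu s : unitI s -> cont_cyl n (fun t u => glue r B T t s u).
Proof.
  intros Hs t u Ht Hu eps Heps.
  destruct (glue_cont t s u Ht Hs Hu eps Heps) as [delta [Hdelta Hball]].
  exists delta; split; [exact Hdelta|]. intros t' u' Ht' Hu' Htt' Huu'.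
  apply Hball; auto. rewrite Rminus_diag, Rabs_R0; exact Hdelta.
Qed.

End Glue.

Section GlueValues.

Context {X : MetSpace} (n : nat) (r : (nat -> R) -> R -> (nat -> R) * R).
Hypothesis Hr : is_retraction n r.

Lemma retraction_id t u : in_A n (t, u) -> r t u = (t, u).
Proof. exact (proj1 (proj2 Hr) (t, u)). Qed.

Lemma glue_bottom (B : (nat -> R) -> R -> X) T t s : sphere n t -> glue r B T t s 0 = B t s.
Proof.
  intros Ht. unfold glue, paste.
  rewrite retraction_id by (split; [exact Ht|split; [exact unitI_0|left; reflexivity]]).
  simpl. destruct (Req_EM_T 0 0); [reflexivity|contradiction].
Qed.

Lemma glue_d0 (B : (nat -> R) -> R -> X) T s u :
  B d0 s = T s 0 -> unitI u -> glue r B T d0 s u = T s u.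
Proof.
  intros Hseam Hu. unfold glue, paste.
  rewrite retraction_id by (split; [apply sphere_d0|split; [exact Hu|right; reflexivity]]).
  simpl. destruct (Req_EM_T u 0) as [->|]; [exact Hseam|reflexivity].
Qed.

Lemma glue_congr (B B' : (nat -> R) -> R -> X) T T' t s s' u : sphere n t -> unitI u ->
  (forall v, sphere n v -> B v s = B' v s') -> (forall u', unitI u' -> T s u' = T' s' u') ->
  glue r B T t s u = glue r B' T' t s' u.
Proof.
  intros Ht Hu HBB' HTT'. unfold glue, paste.
  destruct (proj1 Hr t u Ht Hu) as [Hp [Hpu _]].
  destruct (Req_EM_T (snd (r t u)) 0); auto.
Qed.

End GlueValues.

(** * Path-conjugation *)

Section PathConjugation.

Context {X : MetSpace} (n : nat) (r : (nat -> R) -> R -> (nat -> R) * R) (x0 : X).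
Hypothesis Hr : is_retraction n r.

Lemma path_conj_glue (gamma : R -> X) (a : (nat -> R) -> X) t :
  path_conj n r gamma a t = glue r (fun v _ => a v) (fun _ u => gamma (1 - u)) t 0 1.
Proof. reflexivity. Qed.

Lemma path_conj_htpy (G : (nat -> R) -> R -> X) (Gam : R -> R -> X) (gamma0 gamma1 : R -> X)
  (a a' : (nat -> R) -> X) :
  cont_cyl n G -> cont_square Gam ->
  (forall v, sphere n v -> G v 0 = a v /\ G v 1 = a' v) ->
  (forall u, unitI u -> Gam 0 u = gamma0 u /\ Gam 1 u = gamma1 u) ->
  (forall s, unitI s -> G d0 s = Gam s 1 /\ Gam s 0 = x0) ->
  based_htpy n x0 (path_conj n r gamma0 a) (path_conj n r gamma1 a').
Proof.
  intros HG HGam HGends HGamends Hfibre.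
  set (T := fun s u => Gam s (1 - u)).
  assert (Hseam : forall s, unitI s -> G d0 s = T s 0).
  { intros s Hs. unfold T. rewrite Rminus_0_r. apply Hfibre, Hs. }
  assert (HT_ends : forall u, unitI u -> T 0 u = gamma0 (1 - u) /\ T 1 u = gamma1 (1 - u)).
  { intros u Hu. apply HGamends. unfold unitI in *; lra. }
  exists (fun t s => glue r G T t s 1). split; [|split].
  - apply cont_cyl_glue_ts;
      [exact Hr|exact HG|apply cont_square_reflect, HGam|exact Hseam|exact unitI_1].
  - intros v Hv. rewrite !path_conj_glue. split; apply (glue_congr n); auto using unitI_1;
      intros; first [apply HGends | apply HT_ends]; assumption.
  - intros s Hs. rewrite (glue_d0 n) by auto using unitI_1.
    unfold T. rewrite Rminus_diag. apply Hfibre, Hs.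
Qed.

Lemma path_conj_const_htpy (a : (nat -> R) -> X) :
  is_loop n x0 a -> based_htpy n x0 a (path_conj n r (fun _ => x0) a).
Proof.
  intros [Ha Ha0].
  exists (fun t u => glue r (fun v _ => a v) (fun _ _ => x0) t 0 u). split; [|split].
  - apply cont_cyl_glue_tu; auto using cont_cyl_stationary, cont_square_const, unitI_0.
  - intros v Hv. split; [apply (glue_bottom n); assumption|reflexivity].
  - intros s Hs. apply (glue_d0 n); assumption.
Qed.

Lemma path_conj_dist_le (gamma gamma' : R -> X) (a a' : (nat -> R) -> X) M t : sphere n t ->
  (forall v, sphere n v -> mdist (a v) (a' v) <= M) ->
  (forall s, unitI s -> mdist (gamma s) (gamma' s) <= M) ->
  mdist (path_conj n r gamma a t) (path_conj n r gamma' a' t) <= M.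
Proof.
  intros Ht Ha Hgamma. unfold path_conj; cbv zeta.
  destruct (proj1 Hr t 1 Ht unitI_1) as [Hp [Hpu _]].
  destruct (Req_EM_T (snd (r t 1)) 0).
  - apply Ha, Hp.
  - apply Hgamma. unfold unitI in *; lra.
Qed.

Lemma mu_path_conj_le (gamma : R -> X) (a a' : (nat -> R) -> X) :
  cont_sphere n a -> cont_sphere n a' ->
  mu n (path_conj n r gamma a) (path_conj n r gamma a') <= mu n a a'.
Proof.
  intros Ha Ha'. apply mu_le. intros t Ht. apply path_conj_dist_le; [exact Ht| |].
  - intros v Hv. apply mu_ge; assumption.
  - intros s _. rewrite (proj2 (mdist_eq0 _ _ _) eq_refl). apply mu_nonneg; assumption.
Qed.

Lemma mu_pi1_act_le (g g' a a' : (nat -> R) -> X) : cont_sphere 1 g -> cont_sphere 1 g' ->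
  cont_sphere n a -> cont_sphere n a' ->
  mu n (pi1_act n r g a) (pi1_act n r g' a') <= Rmax (mu n a a') (mu 1 g g').
Proof.
  intros Hg Hg' Ha Ha'. apply mu_le. intros t Ht. apply path_conj_dist_le; [exact Ht| |].
  - intros v Hv. eapply Rle_trans; [apply (mu_ge n); assumption|apply Rmax_l].
  - intros s _. eapply Rle_trans; [apply (mu_ge 1); auto using sphere_circ_exp|apply Rmax_r].
Qed.

Lemma pi1_act_htpy (g g' a a' : (nat -> R) -> X) :
  based_htpy 1 x0 g g' -> based_htpy n x0 a a' ->
  based_htpy n x0 (pi1_act n r g a) (pi1_act n r g' a').
Proof.
  intros [H [HH [HHends HHbase]]] [G [HG [HGends HGbase]]].
  apply (path_conj_htpy G (fun s u => H (circ_exp u) s)); [exact HG| |exact HGends| |].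
  - apply cont_square_circ; [exact HH|exact square_lipschitz_snd].
  - intros u _. split; apply HHends, sphere_circ_exp.
  - intros s Hs. rewrite circ_exp_1, circ_exp_0, HGbase, HHbase by exact Hs. split; reflexivity.
Qed.

Lemma pi1_act_loop (g a : (nat -> R) -> X) :
  is_loop 1 x0 g -> is_loop n x0 a -> is_loop n x0 (pi1_act n r g a).
Proof.
  intros Hg Ha. apply (loop_of_based_htpy n x0 (pi1_act n r g a)).
  apply pi1_act_htpy; apply based_htpy_refl; assumption.
Qed.

(* Insert the constant path, grow it through the paths [u |-> g (e (1 - s u))] into the
   reversed loop while the loop [a] grows into [pi1_act g a], then move [pi1_act g a] to [a']. *)
Lemma pi1_act_unconj_htpy (g a a' : (nat -> R) -> X) : is_loop 1 x0 g -> is_loop n x0 a ->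
  based_htpy n x0 (pi1_act n r g a) a' ->
  based_htpy n x0 a (path_conj n r (fun s => g (circ_exp (1 - s))) a').
Proof.
  intros [Hg Hg0] [Ha Ha0] [K [HK [HKends HKbase]]].
  assert (Hg1 : g (circ_exp 1) = x0) by (rewrite circ_exp_1; exact Hg0).
  assert (Hg0' : g (circ_exp 0) = x0) by (rewrite circ_exp_0; exact Hg0).
  assert (Hreverse : cont_square (fun _ u => g (circ_exp (1 - u)))).
  { apply (cont_square_circ (fun v _ => g v)); [apply cont_cyl_stationary, Hg|].
    exact square_lipschitz_1_sub_snd. }
  set (F := fun t s => glue r (fun v _ => a v) (fun _ u => g (circ_exp (1 - u))) t 0 s).
  apply based_htpy_trans with (path_conj n r (fun _ => x0) a);
    [apply path_conj_const_htpy; split; assumption|].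
  apply based_htpy_trans with (path_conj n r (fun s => g (circ_exp (1 - s))) (pi1_act n r g a)).
  - apply (path_conj_htpy F (fun s u => g (circ_exp (1 - s * u)))).
    + apply cont_cyl_glue_tu; auto using cont_cyl_stationary, unitI_0.
      intros s _. rewrite Rminus_0_r. congruence.
    + apply (cont_square_circ (fun v _ => g v)); [apply cont_cyl_stationary, Hg|].
      exact square_lipschitz_1_sub_mul.
    + intros v Hv. split; [apply (glue_bottom n); assumption|reflexivity].
    + intros u _. rewrite Rmult_0_l, Rminus_0_r, Rmult_1_l. split; [exact Hg1|reflexivity].
    + intros s Hs. rewrite Rmult_0_r, Rminus_0_r, Rmult_1_r. split; [|exact Hg1].
      apply (glue_d0 n); [exact Hr| |exact Hs]. rewrite Rminus_0_r. congruence.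
  - apply (path_conj_htpy K (fun _ u => g (circ_exp (1 - u))));
      [exact HK|exact Hreverse|exact HKends| |].
    + intros u _. split; reflexivity.
    + intros s Hs. rewrite Rminus_diag, Rminus_0_r, Hg0', Hg1.
      split; [apply HKbase, Hs|reflexivity].
Qed.

Lemma rho_pi1_act_lt (g g' a a' : (nat -> R) -> X) eps :
  is_loop 1 x0 g -> is_loop 1 x0 g' -> is_loop n x0 a -> is_loop n x0 a' ->
  rho 1 x0 g g' < eps -> rho n x0 a a' < eps ->
  rho n x0 (pi1_act n r g a) (pi1_act n r g' a') < eps.
Proof.
  intros Hg Hg' Ha Ha' Hrg Hra.
  destruct (rho_lt 1 x0 g g' eps Hg Hg' Hrg) as (g1 & g1' & Hg1 & Hg1' & Hgg1 & Hgg1' & Hmug).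
  destruct (rho_lt n x0 a a' eps Ha Ha' Hra) as (a1 & a1' & Ha1 & Ha1' & Haa1 & Haa1' & Hmua).
  eapply Rle_lt_trans; [apply (rho_le n x0 _ _ (pi1_act n r g1 a1) (pi1_act n r g1' a1'))|].
  - apply pi1_act_loop; assumption.
  - apply pi1_act_loop; assumption.
  - apply pi1_act_htpy; assumption.
  - apply pi1_act_htpy; assumption.
  - eapply Rle_lt_trans.
    + apply mu_pi1_act_le; first [apply Hg1 | apply Hg1' | apply Ha1 | apply Ha1'].
    + apply Rmax_lub_lt; assumption.
Qed.

Lemma rho_pi1_act (g a b : (nat -> R) -> X) :
  is_loop 1 x0 g -> is_loop n x0 a -> is_loop n x0 b ->
  rho n x0 (pi1_act n r g a) (pi1_act n r g b) = rho n x0 a b.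
Proof.
  intros Hg Ha Hb. apply Rle_antisym.
  - apply (rho_le_of_nonexpanding n x0 (pi1_act n r g)); [exact Ha|exact Hb| | |].
    + intros c d Hc Hd. apply mu_path_conj_le; [apply Hc|apply Hd].
    + intros c Hc Hac. apply pi1_act_htpy; [apply based_htpy_refl|]; assumption.
    + intros d Hd Hbd. apply pi1_act_htpy; [apply based_htpy_refl|]; assumption.
  - apply (rho_le_of_nonexpanding n x0 (path_conj n r (fun s => g (circ_exp (1 - s)))));
      [apply pi1_act_loop; assumption|apply pi1_act_loop; assumption| | |].
    + intros c d Hc Hd. apply mu_path_conj_le; [apply Hc|apply Hd].
    + intros c Hc Hac. apply pi1_act_unconj_htpy; assumption.
    + intros d Hd Hbd. apply pi1_act_unconj_htpy; assumption.
Qed.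

End PathConjugation.

Theorem theorem4p12 (X : MetSpace) (x0 : X) (n : nat) (r : (nat -> R) -> R -> (nat -> R) * R) :
  (1 <= n)%nat -> path_connected X -> is_retraction n r ->
  (* joint continuity of pi_1 x pi_n -> pi_n w.r.t. the rho-topologies *)
  (forall g alpha, is_loop 1 x0 g -> is_loop n x0 alpha ->
     forall eps, 0 < eps -> exists delta, 0 < delta /\
       forall g' alpha', is_loop 1 x0 g' -> is_loop n x0 alpha' ->
         rho 1 x0 g g' < delta -> rho n x0 alpha alpha' < delta ->
         rho n x0 (pi1_act n r g alpha) (pi1_act n r g' alpha') < eps)
  /\
  (* pi_1 acts by isometries of (pi_n, rho) *)
  (forall g alpha beta, is_loop 1 x0 g -> is_loop n x0 alpha -> is_loop n x0 beta ->
     rho n x0 (pi1_act n r g alpha) (pi1_act n r g beta) = rho n x0 alpha beta).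
Proof.
  intros _ _ Hr. split.
  - intros g a Hg Ha eps Heps. exists eps. split; [exact Heps|].
    intros g' a' Hg' Ha'. apply rho_pi1_act_lt; assumption.
  - intros g a b. apply rho_pi1_act, Hr.
Qed.
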